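(* Let $\lambda_0>0$, $k_0 = 2\pi/\lambda_0$, $z_\text{b}>0$, and let $x_\text{b}^{(1)} < x_\text{b}^{(2)}$ be real numbers. Set $\mathcal{O}_\text{d} = (-\infty, x_\text{b}^{(1)}) \cup (x_\text{b}^{(2)}, +\infty)$. For $z>z_\text{b}$ and $x,\nu\in\mathbb{R}$ define $$K(z,x,\nu) = \frac{j}{\lambda_0 \sqrt{z_\text{b}\,(z-z_\text{b})}} \int_{\mathcal{O}_\text{d}} e^{-j \frac{k_0}{2 z_\text{b}} (\xi-\nu)^2}\, e^{-j \frac{k_0}{2 (z-z_\text{b})} (x-\xi)^2} \, \mathrm{d}\xi .$$ Then $$K(z,x,\nu) = \frac{1}{2} \sqrt{\frac{j}{\lambda_0 \, z}} \, e^{-j \frac{k_0}{2 z} (\nu-x)^2} \, F(z,x,\nu),$$ where $$F(z,x,\nu) = 1 + \operatorname{Erf}\!\left(\sqrt{\frac{j k_0 z}{2 z_\text{b} (z-z_\text{b})}} \left[ x_\text{b}^{(1)} - \frac{z_\text{b} x}{z} - \frac{(z-z_\text{b}) \nu}{z}\right]\right) + \operatorname{Erfc}\!\left(\sqrt{\frac{j k_0 z}{2 z_\text{b} (z-z_\text{b})}} \left[ x_\text{b}^{(2)} - \frac{z_\text{b} x}{z} - \frac{(z-z_\text{b}) \nu}{z}\right]\right).$$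
   Context: Here $j$ denotes the imaginary unit ($j^2=-1$). Square roots of complex numbers are principal-branch square roots (so $\sqrt{j}=e^{j\pi/4}$, and $\sqrt{j\,c}=e^{j\pi/4}\sqrt{c}$ for $c>0$). The integrals over the unbounded intervals are oscillatory and are understood as improper (limit) integrals. $\operatorname{Erf}(w) = \frac{2}{\sqrt{\pi}}\int_0^w e^{-t^2}\,\mathrm{d}t$ is the error function extended to complex arguments (an entire function), and $\operatorname{Erfc}(w) = 1 - \operatorname{Erf}(w)$ is the complementary error function. The function $K$ is the paraxial knife-edge diffraction kernel from an aperture point $\nu$ on the plane $z=0$ to an observation point $(z,x)$ beyond a thin obstacle occupying $[x_\text{b}^{(1)},x_\text{b}^{(2)}]$ in the plane $z=z_\text{b}$. *)

From Stdlib Require Import Reals.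
From Coquelicot Require Import Coquelicot.
Open Scope R_scope.

Definition Cj : C := (0, 1).

Definition cexp (z : C) : C := (exp (fst z) * cos (snd z), exp (fst z) * sin (snd z)).

Definition Csqrt (z : C) : C :=
  let r := Cmod z in
  let a := sqrt ((r + fst z) / 2) in
  let b := sqrt ((r - fst z) / 2) in
  if Rlt_dec (snd z) 0 then (a, - b) else (a, b).

(* Erf(w) = 2/sqrt(pi) * int_0^w e^{-t^2} dt, integrated along the segment [0,w]
   (t = s w, s in [0,1]); this is the entire extension of erf. *)
Definition Erf (w : C) : C :=
  Cmult (RtoC (2 / sqrt PI))
        (Cmult w (@RInt C_R_CompleteNormedModule (fun s : R => cexp (Copp (Cmult (Cmult (RtoC s) w) (Cmult (RtoC s) w)))) 0 1)).

Definition Erfc (w : C) : C := Cminus (RtoC 1) (Erf w).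

Definition Kintegrand (lambda0 zb z x nu : R) (xi : R) : C :=
  let k0 := 2 * PI / lambda0 in
  Cmult (cexp (Cmult Cj (RtoC (- (k0 / (2 * zb)) * (xi - nu) ^ 2))))
        (cexp (Cmult Cj (RtoC (- (k0 / (2 * (z - zb))) * (x - xi) ^ 2)))).

(* K(z,x,nu), given the values I1, I2 of the improper integrals over
   (-oo, xb1) and (xb2, +oo) *)
Definition Kvalue (lambda0 zb z : R) (I1 I2 : C) : C :=
  Cmult (Cmult Cj (RtoC (1 / (lambda0 * sqrt (zb * (z - zb)))))) (Cplus I1 I2).

Definition Ffun (lambda0 zb xb1 xb2 z x nu : R) : C :=
  let k0 := 2 * PI / lambda0 in
  let s := Csqrt (Cmult Cj (RtoC (k0 * z / (2 * zb * (z - zb))))) in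
  let c := zb * x / z + (z - zb) * nu / z in
  Cplus (Cplus (RtoC 1) (Erf (Cmult s (RtoC (xb1 - c)))))
        (Erfc (Cmult s (RtoC (xb2 - c)))).

Definition Kclosed (lambda0 zb xb1 xb2 z x nu : R) : C :=
  let k0 := 2 * PI / lambda0 in
  Cmult (Cmult (Cmult (RtoC (1/2)) (Csqrt (Cmult Cj (RtoC (1 / (lambda0 * z))))))
               (cexp (Cmult Cj (RtoC (- (k0 / (2 * z)) * (nu - x) ^ 2)))))
        (Ffun lambda0 zb xb1 xb2 z x nu).

From Stdlib Require Import Reals Lra.
From Coquelicot Require Import Coquelicot.
Open Scope R_scope.

(* Completing the square in [xi] writes the integrand as a constant phase times the
   chirp [exp (-j a (xi - c)^2)], with [a = k0 z / (2 zb (z - zb))] and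
   [c = (zb x + (z - zb) nu) / z].  For [sigma = sqrt (j a)], the segment integral
   defining [Erf] turns [int_c^X] of the chirp into [sqrt PI / 2 / sigma * Erf (sigma (X - c))],
   so both improper integrals reduce to the oddness of [Erf] and the limit
   [Erf (p (1 + j)) -> 1] as [p -> +oo].  That limit combines the Gaussian integral
   [int_0^oo exp (-t^2) = sqrt PI / 2] (via the constant function
   [gauss_int x ^ 2 + int_0^1 exp (-x^2 (1 + t^2)) / (1 + t^2)]) with Cauchy's theorem on
   the segment from [p] to [p + j p], proved by differentiating [Erf (p + j y)] in [y];
   on that segment [|exp (-w^2)| <= exp (p (y - p))]. *)

Lemma ex_RInt_of_derivable (f : R -> R) a b : (forall x, ex_derive f x) -> ex_RInt f a b.
Proof.
  intros Hf. apply (@ex_RInt_continuous R_CompleteNormedModule). intros x _.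
  exact (@ex_derive_continuous R_AbsRing R_NormedModule f x (Hf x)).
Qed.

Lemma exp_le_compat x y : x <= y -> exp x <= exp y.
Proof. intros [Hlt | ->]; [left; apply exp_increasing, Hlt | right; reflexivity]. Qed.

Ltac change_to_R_eq := match goal with |- @eq _ ?a ?b => change (@eq R a b) end.

Ltac continuity_2d :=
  repeat first
    [ apply continuity_2d_pt_mult | apply continuity_2d_pt_plus
    | apply continuity_2d_pt_minus | apply continuity_2d_pt_opp
    | apply continuity_2d_pt_id1 | apply continuity_2d_pt_id2
    | apply continuity_2d_pt_const
    | apply (continuity_1d_2d_pt_comp exp); [apply derivable_continuous, derivable_exp|]
    | apply (continuity_1d_2d_pt_comp cos); [apply continuity_cos|]
    | apply (continuity_1d_2d_pt_comp sin); [apply continuity_sin|] ].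

Lemma continuous_of_continuity_2d_pt (d : R -> R -> R) u s :
  continuity_2d_pt d u s -> continuous (d u) s.
Proof.
  intros Hd. apply filterlim_locally. intros eps.
  destruct (Hd eps) as [delta Hdelta].
  exists delta. intros s' Hs'. apply Hdelta; [|exact Hs'].
  rewrite Rminus_eq_0, Rabs_R0. apply cond_pos.
Qed.

Lemma is_derive_RInt_param_exact (g A d : R -> R -> R) y :
  (forall u s, is_derive (fun u => g u s) u (d u s)) ->
  (forall u s, is_derive (A u) s (d u s)) ->
  (forall u s, continuity_2d_pt d u s) ->
  (forall u, ex_RInt (g u) 0 1) ->
  is_derive (fun u => RInt (g u) 0 1) y (A y 1 - A y 0).
Proof.
  intros Hg HA Hd Hint.
  assert (HdA : RInt (d y) 0 1 = A y 1 - A y 0).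
  { apply is_RInt_unique, (is_RInt_derive (A y) (d y)).
    - intros s _. apply HA.
    - intros s _. apply continuous_of_continuity_2d_pt, Hd. }
  rewrite <- HdA.
  replace (RInt (d y) 0 1) with (RInt (fun s => Derive (fun u => g u s) y) 0 1).
  2: { apply RInt_ext. intros s _. apply is_derive_unique, Hg. }
  apply is_derive_RInt_param.
  - apply filter_forall. intros u s _. eexists. apply Hg.
  - intros s _. apply (continuity_2d_pt_ext d).
    + intros u v. symmetry. apply is_derive_unique, Hg.
    + apply Hd.
  - apply filter_forall. exact Hint.
Qed.

Lemma Rabs_sub_le_of_is_derive_exp_bound (h a : R -> R) p :
  0 < p ->
  (forall y, is_derive h y (a y)) -> (forall y, continuous a y) ->
  (forall y, 0 <= y <= p -> Rabs (a y) <= exp (p * (y - p))) ->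
  Rabs (h p - h 0) <= 1 / p.
Proof.
  intros Hp Hh Ha Hbound.
  assert (Hexp : is_RInt (fun y => exp (p * (y - p))) 0 p ((1 - exp (- p ^ 2)) / p)).
  { replace ((1 - exp (- p ^ 2)) / p) with (exp (p * (p - p)) / p - exp (p * (0 - p)) / p).
    2: { replace (p * (p - p)) with 0 by ring. replace (p * (0 - p)) with (- p ^ 2) by ring.
         rewrite exp_0. field. lra. }
    apply (is_RInt_derive (fun y => exp (p * (y - p)) / p)).
    - intros y _. auto_derive; [exact I|]. unfold Rminus. field. lra.
    - intros y _. apply (@ex_derive_continuous R_AbsRing R_NormedModule). auto_derive. auto. }
  apply Rle_trans with ((1 - exp (- p ^ 2)) / p).
  - apply (norm_RInt_le a (fun y => exp (p * (y - p))) 0 p); [lra | exact Hbound | | exact Hexp].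
    apply (is_RInt_derive h a). intros y _. apply Hh. intros y _. apply Ha.
  - pose proof (exp_pos (- p ^ 2)).
    apply Rmult_le_compat_r; [left; apply Rinv_0_lt_compat|]; lra.
Qed.

Lemma filterlim_affine_p_infty (v c : R) :
  0 < v -> filterlim (fun X => v * (X - c)) (Rbar_locally p_infty) (Rbar_locally p_infty).
Proof.
  intros Hv P [M HM]. exists (c + M / v). intros X HX. apply HM.
  assert (Hdiv : v * (M / v) = M) by (field; lra). nra.
Qed.

Lemma filterlim_at_point_self {V : UniformSpace} (F : R -> V) (b : R) :
  filterlim F (at_point b) (locally (F b)).
Proof. intros P HP. exact (locally_singleton _ _ HP). Qed.

Lemma is_RInt_gen_of_primitive {V : NormedModule R_AbsRing}
  {Fa Fb : (R -> Prop) -> Prop} {FFa : Filter Fa} {FFb : Filter Fb}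
  (f F : R -> V) (la lb : V) :
  (forall a b, is_RInt f a b (minus (F b) (F a))) ->
  filterlim F Fa (locally la) -> filterlim F Fb (locally lb) ->
  is_RInt_gen f Fa Fb (minus lb la).
Proof.
  intros Hf Ha Hb P HP.
  assert (Hlim : filterlim (fun ab : R * R => plus (F (snd ab)) (opp (F (fst ab))))
                   (filter_prod Fa Fb) (locally (plus lb (opp la)))).
  { apply (filterlim_comp_2 (fun ab : R * R => F (snd ab)) (fun ab => opp (F (fst ab))) plus
             (G := locally lb) (H := locally (opp la))).
    - apply (filterlim_comp _ _ _ snd F _ Fb); [apply filterlim_snd | exact Hb].
    - apply (filterlim_comp _ _ _ (fun ab : R * R => F (fst ab)) opp _ (locally la));
        [apply (filterlim_comp _ _ _ fst F _ Fa); [apply filterlim_fst | exact Ha]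
        | apply filterlim_opp].
    - apply filterlim_plus. }
  unfold filtermapi. apply (filter_imp (fun ab : R * R => P (minus (F (snd ab)) (F (fst ab))))).
  - intros ab HPab. exists (minus (F (snd ab)) (F (fst ab))). split; [apply Hf | exact HPab].
  - exact (Hlim P HP).
Qed.

Lemma is_RInt_Cmult (k : C) (f : R -> C) a b (l : C) :
  @is_RInt C_R_NormedModule f a b l ->
  @is_RInt C_R_NormedModule (fun t => Cmult k (f t)) a b (Cmult k l).
Proof.
  intros H. destruct k as [k1 k2].
  pose proof (is_RInt_fct_extend_fst (U := R_NormedModule) (V := R_NormedModule) f a b l H) as H1.
  pose proof (is_RInt_fct_extend_snd (U := R_NormedModule) (V := R_NormedModule) f a b l H) as H2.
  destruct l as [l1 l2]. simpl in H1, H2. unfold Cmult. simpl.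
  apply (is_RInt_fct_extend_pair (U := R_NormedModule) (V := R_NormedModule)); simpl.
  - apply (@is_RInt_minus R_NormedModule); apply (@is_RInt_scal R_NormedModule); assumption.
  - apply (@is_RInt_plus R_NormedModule); apply (@is_RInt_scal R_NormedModule); assumption.
Qed.

Lemma ex_RInt_C_of_derivable (f g : R -> R) a b :
  (forall x, ex_derive f x) -> (forall x, ex_derive g x) ->
  @ex_RInt C_R_NormedModule (fun t => (f t, g t)) a b.
Proof.
  intros Hf Hg.
  apply (ex_RInt_fct_extend_pair (U := R_NormedModule) (V := R_NormedModule));
    apply ex_RInt_of_derivable; assumption.
Qed.

Lemma filterlim_Cmult_l {T : Type} {F : (T -> Prop) -> Prop} {FF : Filter F}
  (k : C) (g : T -> C) (l : C) :
  filterlim g F (locally l) -> filterlim (fun t => Cmult k (g t)) F (locally (Cmult k l)).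
Proof.
  intros Hg. apply (filterlim_comp _ _ _ g (Cmult k) _ (locally l)); [exact Hg|].
  exact (@filterlim_scal_r C_AbsRing C_NormedModule k l).
Qed.

Lemma Cmult_Cj r : Cmult Cj (RtoC r) = (0, r).
Proof. unfold Cmult, Cj, RtoC. simpl. f_equal; ring. Qed.

Lemma cexp_Cj r : cexp (Cmult Cj (RtoC r)) = (cos r, sin r).
Proof. rewrite Cmult_Cj. unfold cexp. simpl. rewrite exp_0. f_equal; ring. Qed.

Lemma cexp_Cj_plus a b :
  Cmult (cexp (Cmult Cj (RtoC a))) (cexp (Cmult Cj (RtoC b))) = cexp (Cmult Cj (RtoC (a + b))).
Proof.
  rewrite !cexp_Cj. unfold Cmult. simpl. rewrite cos_plus, sin_plus. f_equal; ring.
Qed.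

Lemma Csqrt_Cj b : 0 < b -> Csqrt (Cmult Cj (RtoC b)) = (sqrt (b / 2), sqrt (b / 2)).
Proof.
  intros Hb. rewrite Cmult_Cj. unfold Csqrt, Cmod. simpl.
  replace (0 * (0 * 1) + b * (b * 1)) with (b * b) by ring.
  rewrite sqrt_square by lra.
  destruct (Rlt_dec b 0); [lra|]. f_equal; f_equal; field.
Qed.

(** * The Gaussian integral *)

Definition gauss_int (x : R) : R := RInt (fun t => exp (- t ^ 2)) 0 x.

Definition gauss_energy (x : R) : R :=
  gauss_int x ^ 2 + RInt (fun t => exp (- (x ^ 2 * (1 + t ^ 2))) / (1 + t ^ 2)) 0 1.

Lemma one_plus_sqr_pos t : 0 < 1 + t ^ 2.
Proof. nra. Qed.

Lemma ex_RInt_gauss a b : ex_RInt (fun t => exp (- t ^ 2)) a b.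
Proof. apply ex_RInt_of_derivable. intros t. auto_derive. auto. Qed.

Lemma is_derive_gauss_int x : is_derive gauss_int x (exp (- x ^ 2)).
Proof.
  apply (is_derive_RInt (fun t => exp (- t ^ 2)) gauss_int 0 x).
  - apply filter_forall. intros y. apply (@RInt_correct R_CompleteNormedModule), ex_RInt_gauss.
  - apply ex_derive_continuous. auto_derive. auto.
Qed.

Lemma is_RInt_gauss_rescaled x :
  is_RInt (fun t => -2 * x * exp (- (x ^ 2 * (1 + t ^ 2)))) 0 1 (-2 * exp (- x ^ 2) * gauss_int x).
Proof.
  assert (H : is_RInt (fun t => exp (- t ^ 2)) (x * 0 + 0) (x * 1 + 0) (gauss_int x)).
  { rewrite Rmult_0_r, Rmult_1_r, !Rplus_0_r.
    apply (@RInt_correct R_CompleteNormedModule), ex_RInt_gauss. }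
  apply is_RInt_comp_lin, (is_RInt_scal _ _ _ (-2 * exp (- x ^ 2))) in H.
  eapply is_RInt_ext; [|exact H]. intros t _.
  change (scal ?a ?b) with (a * b). change (scal ?a ?b) with (a * b).
  replace (- (x ^ 2 * (1 + t ^ 2))) with (- x ^ 2 + - (x * t + 0) ^ 2) by ring.
  rewrite exp_plus. change_to_R_eq. ring.
Qed.

Lemma is_derive_gauss_energy x : is_derive gauss_energy x 0.
Proof.
  set (u := fun x t => exp (- (x ^ 2 * (1 + t ^ 2))) / (1 + t ^ 2)).
  set (du := fun x t => -2 * x * exp (- (x ^ 2 * (1 + t ^ 2)))).
  assert (Hu : forall x t, is_derive (fun x => u x t) x (du x t)).
  { intros y t. pose proof (one_plus_sqr_pos t). unfold u, du.
    auto_derive; [exact I|]. simpl in *. field. lra. }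
  assert (Hsq : is_derive (fun x => gauss_int x ^ 2) x (2 * exp (- x ^ 2) * gauss_int x)).
  { replace (2 * exp (- x ^ 2) * gauss_int x)
      with (INR 2 * exp (- x ^ 2) * gauss_int x ^ Init.Nat.pred 2) by (simpl; ring).
    apply is_derive_pow, is_derive_gauss_int. }
  assert (Hparam : is_derive (fun x => RInt (u x) 0 1) x (RInt (du x) 0 1)).
  { replace (RInt (du x) 0 1) with (RInt (fun t => Derive (fun y => u y t) x) 0 1).
    2: { apply RInt_ext. intros t _. apply is_derive_unique, Hu. }
    apply (is_derive_RInt_param u).
    - apply filter_forall. intros y t _. eexists. apply Hu.
    - intros t _. apply (continuity_2d_pt_ext du).
      + intros y s. symmetry. apply is_derive_unique, Hu.
      + unfold du. simpl. continuity_2d.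
    - apply filter_forall. intros y. apply ex_RInt_of_derivable. intros t.
      pose proof (one_plus_sqr_pos t). unfold u. auto_derive. lra. }
  unfold du in Hparam. rewrite (is_RInt_unique _ _ _ _ (is_RInt_gauss_rescaled x)) in Hparam.
  replace 0 with (2 * exp (- x ^ 2) * gauss_int x + -2 * exp (- x ^ 2) * gauss_int x) by ring.
  exact (@is_derive_plus R_AbsRing R_NormedModule _ _ x _ _ Hsq Hparam).
Qed.

Lemma gauss_energy_eq x : gauss_energy x = PI / 4.
Proof.
  assert (Hconst : gauss_energy x = gauss_energy 0).
  { pose proof (is_RInt_derive gauss_energy (fun _ => 0) 0 x
                  (fun y _ => is_derive_gauss_energy y) (fun y _ => continuous_const 0 y)) as H.
    apply is_RInt_unique in H. rewrite RInt_const in H.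
    change (scal (x - 0) 0 = gauss_energy x - gauss_energy 0) in H.
    change (scal (x - 0) 0) with ((x - 0) * 0) in H. lra. }
  rewrite Hconst. unfold gauss_energy, gauss_int. rewrite RInt_point.
  assert (Hatan : is_RInt (fun t => exp (- (0 ^ 2 * (1 + t ^ 2))) / (1 + t ^ 2)) 0 1
                          (atan 1 - atan 0)).
  { apply (is_RInt_ext (fun t => / (1 + t²))).
    - intros t _. pose proof (one_plus_sqr_pos t).
      replace (- (0 ^ 2 * (1 + t ^ 2))) with 0 by ring. rewrite exp_0.
      change_to_R_eq. unfold Rsqr. field. simpl in *. lra.
    - apply (is_RInt_derive atan (fun t => / (1 + t²))).
      + intros t _. apply is_derive_atan.
      + intros t _. apply (@ex_derive_continuous R_AbsRing R_NormedModule).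
        auto_derive. unfold Rsqr. nra. }
  rewrite (is_RInt_unique _ _ _ _ Hatan), atan_1, atan_0.
  change (0 ^ 2 + (PI / 4 - 0) = PI / 4). ring.
Qed.

Lemma gauss_remainder_bounds x :
  0 <= RInt (fun t => exp (- (x ^ 2 * (1 + t ^ 2))) / (1 + t ^ 2)) 0 1 <= exp (- x ^ 2).
Proof.
  assert (Hint : ex_RInt (fun t => exp (- (x ^ 2 * (1 + t ^ 2))) / (1 + t ^ 2)) 0 1).
  { apply ex_RInt_of_derivable. intros t. pose proof (one_plus_sqr_pos t).
    auto_derive. simpl in *. lra. }
  split.
  - apply RInt_ge_0; [lra | exact Hint |]. intros t _.
    pose proof (one_plus_sqr_pos t). pose proof (exp_pos (- (x ^ 2 * (1 + t ^ 2)))).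
    apply Rlt_le, Rdiv_lt_0_compat; lra.
  - replace (exp (- x ^ 2)) with (RInt (fun _ => exp (- x ^ 2)) 0 1).
    2: { rewrite RInt_const. change ((1 - 0) * exp (- x ^ 2) = exp (- x ^ 2)). ring. }
    apply RInt_le; [lra | exact Hint | apply ex_RInt_const |]. intros t _.
    pose proof (one_plus_sqr_pos t).
    assert (Hexp : exp (- (x ^ 2 * (1 + t ^ 2))) <= exp (- x ^ 2)).
    { apply exp_le_compat. pose proof (pow2_ge_0 x). pose proof (pow2_ge_0 t). nra. }
    apply Rle_trans with (exp (- (x ^ 2 * (1 + t ^ 2)))); [|exact Hexp].
    unfold Rdiv. rewrite <- (Rmult_1_r (exp _)) at 2.
    apply Rmult_le_compat_l; [left; apply exp_pos|].
    rewrite <- Rinv_1. apply Rinv_le_contravar; [lra|]. pose proof (pow2_ge_0 t). lra.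
Qed.

Lemma sqrt_PI_pos : 0 < sqrt PI.
Proof. apply sqrt_lt_R0, PI_RGT_0. Qed.

Lemma gauss_int_bound x :
  0 <= x -> Rabs (gauss_int x - sqrt PI / 2) <= 2 / sqrt PI * exp (- x ^ 2).
Proof.
  intros Hx.
  pose proof (gauss_energy_eq x) as Henergy. unfold gauss_energy in Henergy.
  pose proof (gauss_remainder_bounds x) as Hrem.
  assert (Hg : 0 <= gauss_int x).
  { apply RInt_ge_0; [exact Hx | apply ex_RInt_gauss |]. intros. left. apply exp_pos. }
  pose proof sqrt_PI_pos as Hs.
  assert (Hs2 : sqrt PI * sqrt PI = PI) by (apply sqrt_sqrt; left; apply PI_RGT_0).
  set (s := sqrt PI) in *. set (g := gauss_int x) in *.
  set (U := RInt _ 0 1) in *.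
  (* [gauss_energy_eq] says [g^2 + U = (s/2)^2]. *)
  assert (Hdiff : g - s / 2 = - U / (g + s / 2)).
  { field_simplify_eq; [|lra]. simpl in Henergy. nra. }
  rewrite Hdiff. unfold Rdiv. rewrite Rabs_mult, Rabs_Ropp, Rabs_right by lra.
  rewrite Rabs_right by (apply Rle_ge, Rlt_le, Rinv_0_lt_compat; lra).
  rewrite (Rmult_comm (2 * / s)).
  apply Rmult_le_compat; [lra | left; apply Rinv_0_lt_compat; lra | lra |].
  replace (2 * / s) with (/ (s / 2)) by (field; lra).
  apply Rinv_le_contravar; lra.
Qed.

(** * The error function on the diagonal *)

Local Notation RInt_C f a b := (@RInt C_R_CompleteNormedModule f a b).

Definition erf_kernel (w : C) (s : R) : C :=
  cexp (Copp (Cmult (Cmult (RtoC s) w) (Cmult (RtoC s) w))).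

Lemma Erf_kernelE w : Erf w = Cmult (RtoC (2 / sqrt PI)) (Cmult w (RInt_C (erf_kernel w) 0 1)).
Proof. reflexivity. Qed.

Lemma Erf_opp w : Erf (Copp w) = Copp (Erf w).
Proof.
  rewrite !Erf_kernelE.
  rewrite (RInt_ext (V := C_R_CompleteNormedModule) (erf_kernel (Copp w)) (erf_kernel w)).
  - ring.
  - intros s _. unfold erf_kernel. f_equal. ring.
Qed.

(* Real and imaginary parts of [w * erf_kernel w s] for [w = p + j y]. *)
Definition erf_re (p y s : R) : R :=
  exp (- (s ^ 2 * (p ^ 2 - y ^ 2))) * (p * cos (2 * s ^ 2 * p * y) + y * sin (2 * s ^ 2 * p * y)).

Definition erf_im (p y s : R) : R :=
  exp (- (s ^ 2 * (p ^ 2 - y ^ 2))) * (y * cos (2 * s ^ 2 * p * y) - p * sin (2 * s ^ 2 * p * y)).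

Lemma Erf_re_im p y :
  Erf (p, y) = Cmult (RtoC (2 / sqrt PI)) (RInt (erf_re p y) 0 1, RInt (erf_im p y) 0 1).
Proof.
  set (E := fun s => exp (- (s ^ 2 * (p ^ 2 - y ^ 2)))).
  set (phi := fun s => 2 * s ^ 2 * p * y).
  assert (Hkernel : forall s, erf_kernel (p, y) s = (E s * cos (phi s), - (E s * sin (phi s)))).
  { intros s. unfold erf_kernel, cexp, Cmult, Copp, RtoC. simpl.
    match goal with |- (exp ?a * cos ?b, exp ?a' * sin ?b') = _ =>
      replace a with (- (s ^ 2 * (p ^ 2 - y ^ 2))) by ring;
      replace a' with (- (s ^ 2 * (p ^ 2 - y ^ 2))) by ring;
      replace b with (- phi s) by (unfold phi; ring);
      replace b' with (- phi s) by (unfold phi; ring) end.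
    rewrite cos_neg, sin_neg. unfold E. f_equal; ring. }
  assert (Hint : is_RInt (erf_kernel (p, y)) 0 1 (RInt_C (erf_kernel (p, y)) 0 1)).
  { apply (@RInt_correct C_R_CompleteNormedModule).
    apply (ex_RInt_ext (fun s => (E s * cos (phi s), - (E s * sin (phi s))))).
    { intros s _. symmetry. apply Hkernel. }
    apply ex_RInt_C_of_derivable; intros s; unfold E, phi; auto_derive; exact I. }
  rewrite Erf_kernelE. f_equal.
  rewrite <- (@is_RInt_unique C_R_CompleteNormedModule _ _ _ _ (is_RInt_Cmult (p, y) _ _ _ _ Hint)).
  apply (@is_RInt_unique C_R_CompleteNormedModule).
  apply (is_RInt_ext (fun s => (erf_re p y s, erf_im p y s))).
  { intros s _. rewrite Hkernel. unfold Cmult, erf_re, erf_im, E, phi. simpl. f_equal; ring. }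
  apply (is_RInt_fct_extend_pair (U := R_NormedModule) (V := R_NormedModule)
           (fun s => (erf_re p y s, erf_im p y s))); simpl;
    apply (@RInt_correct R_CompleteNormedModule), ex_RInt_of_derivable;
    intros s; unfold erf_re, erf_im; auto_derive; exact I.
Qed.

(* Real and imaginary parts of [j s exp (-(s w)^2)]: its [s]-derivative is the
   [y]-derivative of [w exp (-(s w)^2)] (Cauchy-Riemann), and at [s = 1] it is
   the integrand of [exp (-t^2)] along the vertical segment [p + j [0, y]]. *)
Definition erf_vert_re (p y s : R) : R := s * exp (- (s ^ 2 * (p ^ 2 - y ^ 2))) * sin (2 * s ^ 2 * p * y).
Definition erf_vert_im (p y s : R) : R := s * exp (- (s ^ 2 * (p ^ 2 - y ^ 2))) * cos (2 * s ^ 2 * p * y).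

Lemma is_derive_RInt_erf_re p y :
  is_derive (fun y => RInt (erf_re p y) 0 1) y (erf_vert_re p y 1).
Proof.
  replace (erf_vert_re p y 1) with (erf_vert_re p y 1 - erf_vert_re p y 0)
    by (unfold erf_vert_re; ring).
  apply (is_derive_RInt_param_exact (erf_re p) (erf_vert_re p)
    (fun y s => exp (- (s ^ 2 * (p ^ 2 - y ^ 2))) *
       (4 * s ^ 2 * p * y * cos (2 * s ^ 2 * p * y)
        + sin (2 * s ^ 2 * p * y) * (1 + 2 * s ^ 2 * (y ^ 2 - p ^ 2))))).
  - intros u s. unfold erf_re. auto_derive; [exact I|]. simpl. unfold Rminus. ring.
  - intros u s. unfold erf_vert_re. auto_derive; [exact I|]. simpl. unfold Rminus. ring.
  - intros u s. simpl. continuity_2d.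
  - intros u. apply ex_RInt_of_derivable. intros s. unfold erf_re. auto_derive. exact I.
Qed.

Lemma is_derive_RInt_erf_im p y :
  is_derive (fun y => RInt (erf_im p y) 0 1) y (erf_vert_im p y 1).
Proof.
  replace (erf_vert_im p y 1) with (erf_vert_im p y 1 - erf_vert_im p y 0)
    by (unfold erf_vert_im; ring).
  apply (is_derive_RInt_param_exact (erf_im p) (erf_vert_im p)
    (fun y s => exp (- (s ^ 2 * (p ^ 2 - y ^ 2))) *
       (cos (2 * s ^ 2 * p * y) * (1 - 2 * s ^ 2 * (p ^ 2 - y ^ 2))
        - 4 * s ^ 2 * p * y * sin (2 * s ^ 2 * p * y)))).
  - intros u s. unfold erf_im. auto_derive; [exact I|]. simpl. unfold Rminus. ring.
  - intros u s. unfold erf_vert_im. auto_derive; [exact I|]. simpl. unfold Rminus. ring.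
  - intros u s. simpl. continuity_2d.
  - intros u. apply ex_RInt_of_derivable. intros s. unfold erf_im. auto_derive. exact I.
Qed.

Lemma erf_vert_bound p y :
  0 <= y <= p ->
  Rabs (erf_vert_re p y 1) <= exp (p * (y - p)) /\ Rabs (erf_vert_im p y 1) <= exp (p * (y - p)).
Proof.
  intros Hy.
  assert (HE : exp (- (1 ^ 2 * (p ^ 2 - y ^ 2))) <= exp (p * (y - p))).
  { apply exp_le_compat. simpl. nra. }
  pose proof (exp_pos (- (1 ^ 2 * (p ^ 2 - y ^ 2)))).
  unfold erf_vert_re, erf_vert_im. rewrite !Rabs_mult, Rabs_R1, (Rabs_pos_eq (exp _)) by lra.
  pose proof (Rabs_pos (sin (2 * 1 ^ 2 * p * y))).
  pose proof (Rabs_pos (cos (2 * 1 ^ 2 * p * y))).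
  assert (Rabs (sin (2 * 1 ^ 2 * p * y)) <= 1) by apply Rabs_le, SIN_bound.
  assert (Rabs (cos (2 * 1 ^ 2 * p * y)) <= 1) by apply Rabs_le, COS_bound.
  split; nra.
Qed.

Lemma RInt_erf_re_real p : RInt (erf_re p 0) 0 1 = gauss_int p.
Proof.
  assert (H : is_RInt (fun t => exp (- t ^ 2)) (p * 0 + 0) (p * 1 + 0) (gauss_int p)).
  { rewrite Rmult_0_r, Rmult_1_r, !Rplus_0_r.
    apply (@RInt_correct R_CompleteNormedModule), ex_RInt_gauss. }
  apply is_RInt_comp_lin in H. apply is_RInt_unique.
  eapply is_RInt_ext; [|exact H]. intros s _. change (scal p ?c) with (p * c).
  unfold erf_re. rewrite Rmult_0_r, Rmult_0_l, cos_0.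
  replace (- (s ^ 2 * (p ^ 2 - 0 ^ 2))) with (- (p * s + 0) ^ 2) by ring.
  change_to_R_eq. ring.
Qed.

Lemma RInt_erf_im_real p : RInt (erf_im p 0) 0 1 = 0.
Proof.
  rewrite (RInt_ext _ (fun _ => 0)).
  - rewrite RInt_const. change ((1 - 0) * 0 = 0). ring.
  - intros s _. unfold erf_im. rewrite Rmult_0_r, sin_0. change_to_R_eq. ring.
Qed.

Lemma erf_diag_vertical_bound p :
  0 < p ->
  Rabs (RInt (erf_re p p) 0 1 - gauss_int p) <= 1 / p /\ Rabs (RInt (erf_im p p) 0 1) <= 1 / p.
Proof.
  intros Hp. rewrite <- RInt_erf_re_real.
  replace (RInt (erf_im p p) 0 1) with (RInt (erf_im p p) 0 1 - RInt (erf_im p 0) 0 1)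
    by (rewrite RInt_erf_im_real; ring).
  split.
  - apply (Rabs_sub_le_of_is_derive_exp_bound (fun y => RInt (erf_re p y) 0 1)
             (fun y => erf_vert_re p y 1)); [exact Hp | apply is_derive_RInt_erf_re | |].
    + intros y. apply (@ex_derive_continuous R_AbsRing R_NormedModule).
      unfold erf_vert_re. auto_derive. exact I.
    + intros y Hy. apply erf_vert_bound, Hy.
  - apply (Rabs_sub_le_of_is_derive_exp_bound (fun y => RInt (erf_im p y) 0 1)
             (fun y => erf_vert_im p y 1)); [exact Hp | apply is_derive_RInt_erf_im | |].
    + intros y. apply (@ex_derive_continuous R_AbsRing R_NormedModule).
      unfold erf_vert_im. auto_derive. exact I.
    + intros y Hy. apply erf_vert_bound, Hy.
Qed.

Lemma two_over_sqrt_PI_bounds : 0 < 2 / sqrt PI < 2.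
Proof.
  assert (H1 : 1 < sqrt PI).
  { rewrite <- sqrt_1. apply sqrt_lt_1_alt. pose proof PI2_1. lra. }
  split; [apply Rdiv_lt_0_compat; lra|].
  apply (Rmult_lt_reg_r (sqrt PI)); [lra|]. unfold Rdiv. rewrite Rmult_assoc, Rinv_l by lra. lra.
Qed.

Lemma exp_neg_sqr_le_inv p : 0 < p -> exp (- p ^ 2) <= 1 / p.
Proof.
  intros Hp. rewrite exp_Ropp. unfold Rdiv. rewrite Rmult_1_l.
  apply Rinv_le_contravar; [lra|]. pose proof (exp_ineq1_le (p ^ 2)). nra.
Qed.

Lemma Erf_diag_bound p :
  0 < p -> Rabs (fst (Erf (p, p)) - 1) <= 6 / p /\ Rabs (snd (Erf (p, p))) <= 6 / p.
Proof.
  intros Hp.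
  destruct (erf_diag_vertical_bound p Hp) as [Hre Him].
  pose proof (gauss_int_bound p (Rlt_le _ _ Hp)) as Hgauss.
  pose proof (exp_neg_sqr_le_inv p Hp). pose proof (exp_pos (- p ^ 2)).
  pose proof two_over_sqrt_PI_bounds as [Hk0 Hk2].
  pose proof sqrt_PI_pos.
  rewrite Erf_re_im. unfold Cmult, RtoC. simpl.
  set (k := 2 / sqrt PI) in *.
  assert (Hk : k * (sqrt PI / 2) = 1) by (unfold k; field; lra).
  assert (Hinv : 0 < 1 / p) by (apply Rdiv_lt_0_compat; lra).
  assert (Hkexp : k * exp (- p ^ 2) <= 2 * (1 / p)) by (apply Rmult_le_compat; lra).
  split.
  - replace (k * RInt (erf_re p p) 0 1 - 0 * RInt (erf_im p p) 0 1 - 1)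
      with (k * ((RInt (erf_re p p) 0 1 - gauss_int p) + (gauss_int p - sqrt PI / 2)))
      by (rewrite <- Hk; ring).
    rewrite Rabs_mult, (Rabs_pos_eq k) by lra.
    pose proof (Rabs_triang (RInt (erf_re p p) 0 1 - gauss_int p) (gauss_int p - sqrt PI / 2)).
    replace (6 / p) with (2 * (3 * (1 / p))) by (field; lra).
    apply Rmult_le_compat; try lra. apply Rabs_pos.
  - replace (k * RInt (erf_im p p) 0 1 + 0 * RInt (erf_re p p) 0 1)
      with (k * RInt (erf_im p p) 0 1) by ring.
    rewrite Rabs_mult, (Rabs_pos_eq k) by lra.
    replace (6 / p) with (6 * (1 / p)) by (field; lra).
    apply Rmult_le_compat; try lra. apply Rabs_pos.
Qed.

Lemma filterlim_Erf_diag : filterlim (fun p => Erf (p, p)) (Rbar_locally p_infty) (locally (RtoC 1)).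
Proof.
  apply filterlim_locally. intros eps. pose proof (cond_pos eps) as Heps.
  exists (6 / eps). intros p Hp.
  assert (Hp0 : 0 < p) by (eapply Rlt_trans; [|exact Hp]; apply Rdiv_lt_0_compat; lra).
  assert (Hsmall : 6 / p < eps).
  { apply (Rmult_lt_compat_l eps) in Hp; [|exact Heps].
    replace (eps * (6 / eps)) with 6 in Hp by (field; lra).
    apply (Rmult_lt_reg_r p); [exact Hp0|]. replace (6 / p * p) with 6 by (field; lra). lra. }
  destruct (Erf_diag_bound p Hp0) as [Hre Him].
  destruct (Erf (p, p)) as [e1 e2]. simpl in Hre, Him.
  split; apply (@norm_compat1 R_AbsRing R_NormedModule); simpl;
    change (@norm _ R_NormedModule ?r) with (Rabs r); unfold minus, plus, opp; simpl.
  - replace (e1 + - (1)) with (e1 - 1) by ring. lra.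
  - replace (e2 + - 0) with e2 by ring. lra.
Qed.

Lemma filterlim_Erf_scaled_p_infty (v c : R) :
  0 < v ->
  filterlim (fun X => Erf (Cmult (v, v) (RtoC (X - c)))) (Rbar_locally p_infty) (locally (RtoC 1)).
Proof.
  intros Hv.
  apply (filterlim_ext (fun X => Erf (v * (X - c), v * (X - c)))).
  { intros X. f_equal. unfold Cmult, RtoC. simpl. f_equal; ring. }
  apply (filterlim_comp _ _ _ (fun X => v * (X - c)) (fun p => Erf (p, p)) _ (Rbar_locally p_infty)).
  - apply filterlim_affine_p_infty, Hv.
  - apply filterlim_Erf_diag.
Qed.

Lemma filterlim_Erf_scaled_m_infty (v c : R) :
  0 < v ->
  filterlim (fun X => Erf (Cmult (v, v) (RtoC (X - c)))) (Rbar_locally m_infty)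
    (locally (Copp (RtoC 1))).
Proof.
  intros Hv.
  apply (filterlim_ext (fun X => Copp (Erf (Cmult (v, v) (RtoC (- X - - c)))))).
  { intros X. rewrite <- Erf_opp. f_equal. unfold Cmult, Copp, RtoC. simpl. f_equal; ring. }
  eapply filterlim_comp; [|apply (filterlim_opp (V := C_R_NormedModule))].
  apply (filterlim_comp _ _ _ Ropp (fun Y => Erf (Cmult (v, v) (RtoC (Y - - c)))) _
           (Rbar_locally p_infty)).
  - apply (filterlim_Rbar_opp m_infty).
  - apply filterlim_Erf_scaled_p_infty, Hv.
Qed.

(** * Fresnel integrals *)

Definition chirp (al c xi : R) : C := cexp (Cmult Cj (RtoC (- (al * (xi - c) ^ 2)))).

Definition chirp_half_integral (al : R) : C :=
  Cmult (RtoC (sqrt PI / 2)) (Cinv (Csqrt (Cmult Cj (RtoC al)))).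

Definition chirp_primitive (al c X : R) : C :=
  Cmult (chirp_half_integral al) (Erf (Cmult (Csqrt (Cmult Cj (RtoC al))) (RtoC (X - c)))).

Lemma ex_RInt_chirp al c a b : @ex_RInt C_R_NormedModule (chirp al c) a b.
Proof.
  apply (ex_RInt_ext (fun xi => (cos (- (al * (xi - c) ^ 2)), sin (- (al * (xi - c) ^ 2))))).
  - intros xi _. unfold chirp. rewrite cexp_Cj. reflexivity.
  - apply ex_RInt_C_of_derivable; intros xi; auto_derive; exact I.
Qed.

Lemma Erf_chirp al c D :
  0 < al ->
  Erf (Cmult (Csqrt (Cmult Cj (RtoC al))) (RtoC D)) =
  Cmult (RtoC (2 / sqrt PI)) (Cmult (Csqrt (Cmult Cj (RtoC al))) (RInt_C (chirp al c) c (c + D))).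
Proof.
  intros Hal. rewrite Csqrt_Cj by exact Hal.
  assert (Hvv : sqrt (al / 2) * sqrt (al / 2) = al / 2) by (apply sqrt_sqrt; lra).
  set (v := sqrt (al / 2)) in *.
  (* [(s v (1 + j) D)^2 = j al (s D)^2] *)
  assert (Hkernel : forall s, erf_kernel (Cmult (v, v) (RtoC D)) s = chirp al c (D * s + c)).
  { intros s. unfold erf_kernel, chirp. rewrite Cmult_Cj. f_equal.
    unfold Cmult, Copp, RtoC. simpl. f_equal; [ring|].
    replace al with (2 * (v * v)) by lra. ring. }
  assert (Hlin : RInt_C (chirp al c) c (c + D) =
                 Cmult (RtoC D) (RInt_C (erf_kernel (Cmult (v, v) (RtoC D))) 0 1)).
  { rewrite (RInt_ext (V := C_R_CompleteNormedModule) (erf_kernel (Cmult (v, v) (RtoC D)))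
               (fun s => chirp al c (D * s + c)))
      by (intros s _; apply Hkernel).
    assert (Hint : @is_RInt C_R_NormedModule (chirp al c) (D * 0 + c) (D * 1 + c)
                     (RInt_C (chirp al c) c (c + D))).
    { replace (D * 0 + c) with c by ring. replace (D * 1 + c) with (c + D) by ring.
      apply (@RInt_correct C_R_CompleteNormedModule), ex_RInt_chirp. }
    apply is_RInt_comp_lin in Hint.
    apply (@is_RInt_unique C_R_CompleteNormedModule) in Hint.
    rewrite <- Hint. apply (@is_RInt_unique C_R_CompleteNormedModule).
    apply (is_RInt_ext (fun s => Cmult (RtoC D) (chirp al c (D * s + c)))).
    { intros s _. symmetry. apply scal_R_Cmult. }
    apply is_RInt_Cmult, (@RInt_correct C_R_CompleteNormedModule).
    apply (ex_RInt_ext (fun s => (cos (- (al * (D * s + c - c) ^ 2)), sin (- (al * (D * s + c - c) ^ 2))))).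
    - intros s _. unfold chirp. rewrite cexp_Cj. reflexivity.
    - apply ex_RInt_C_of_derivable; intros s; auto_derive; exact I. }
  rewrite Erf_kernelE, Hlin. ring.
Qed.

Lemma chirp_primitiveE al c X :
  0 < al -> chirp_primitive al c X = RInt_C (chirp al c) c X.
Proof.
  intros Hal. unfold chirp_primitive, chirp_half_integral.
  rewrite (Erf_chirp al c (X - c) Hal). replace (c + (X - c)) with X by ring.
  assert (Hsigma : Csqrt (Cmult Cj (RtoC al)) <> RtoC 0).
  { rewrite Csqrt_Cj by exact Hal. intros Heq. injection Heq as Heq.
    pose proof (sqrt_lt_R0 (al / 2)). lra. }
  pose proof sqrt_PI_pos.
  transitivity (Cmult (RtoC (sqrt PI / 2 * (2 / sqrt PI)))
                  (Cmult (Cmult (Cinv (Csqrt (Cmult Cj (RtoC al)))) (Csqrt (Cmult Cj (RtoC al))))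
                     (RInt_C (chirp al c) c X))).
  - rewrite RtoC_mult. ring.
  - replace (sqrt PI / 2 * (2 / sqrt PI)) with 1 by (field; lra).
    rewrite Cinv_l by exact Hsigma. ring.
Qed.

Lemma is_RInt_chirp al c a b :
  0 < al ->
  @is_RInt C_R_NormedModule (chirp al c) a b (Cminus (chirp_primitive al c b) (chirp_primitive al c a)).
Proof.
  intros Hal. rewrite !chirp_primitiveE by exact Hal.
  replace (Cminus (RInt_C (chirp al c) c b) (RInt_C (chirp al c) c a))
    with (Cplus (Copp (RInt_C (chirp al c) c a)) (RInt_C (chirp al c) c b)) by ring.
  apply (@is_RInt_Chasles C_R_NormedModule _ a c b).
  - apply (@is_RInt_swap C_R_NormedModule), (@RInt_correct C_R_CompleteNormedModule), ex_RInt_chirp.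
  - apply (@RInt_correct C_R_CompleteNormedModule), ex_RInt_chirp.
Qed.

Lemma filterlim_chirp_primitive_p_infty al c :
  0 < al -> filterlim (chirp_primitive al c) (Rbar_locally p_infty) (locally (chirp_half_integral al)).
Proof.
  intros Hal. rewrite <- (Cmult_1_r (chirp_half_integral al)).
  apply filterlim_Cmult_l. rewrite Csqrt_Cj by exact Hal.
  apply filterlim_Erf_scaled_p_infty, sqrt_lt_R0. lra.
Qed.

Lemma filterlim_chirp_primitive_m_infty al c :
  0 < al ->
  filterlim (chirp_primitive al c) (Rbar_locally m_infty) (locally (Copp (chirp_half_integral al))).
Proof.
  intros Hal.
  replace (Copp (chirp_half_integral al)) with (Cmult (chirp_half_integral al) (Copp (RtoC 1))) by ring.
  apply filterlim_Cmult_l. rewrite Csqrt_Cj by exact Hal.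
  apply filterlim_Erf_scaled_m_infty, sqrt_lt_R0. lra.
Qed.

(** * The diffraction kernel *)

(* The exponent of [Kintegrand] is the phase of [K_phase] minus
   [K_rate * (xi - K_center)^2]. *)
Definition K_phase (lambda0 z x nu : R) : C :=
  cexp (Cmult Cj (RtoC (- (2 * PI / lambda0 / (2 * z)) * (nu - x) ^ 2))).

Definition K_rate (lambda0 zb z : R) : R := 2 * PI / lambda0 * z / (2 * zb * (z - zb)).

Definition K_center (zb z x nu : R) : R := zb * x / z + (z - zb) * nu / z.

Lemma K_rate_pos lambda0 zb z : 0 < lambda0 -> 0 < zb -> zb < z -> 0 < K_rate lambda0 zb z.
Proof.
  intros Hl Hzb Hz. pose proof PI_RGT_0. unfold K_rate.
  apply Rdiv_lt_0_compat; [apply Rmult_lt_0_compat; [apply Rdiv_lt_0_compat|]|]; nra.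
Qed.

Lemma sqrt_K_rate_mult lambda0 zb z :
  0 < lambda0 -> 0 < zb -> zb < z ->
  sqrt (1 / (lambda0 * z) / 2) * sqrt (K_rate lambda0 zb z / 2) =
  1 / (lambda0 * sqrt (zb * (z - zb))) * sqrt PI / 2.
Proof.
  intros Hl Hzb Hz. pose proof (K_rate_pos lambda0 zb z Hl Hzb Hz).
  assert (Hprod : 0 < zb * (z - zb)) by nra.
  pose proof (sqrt_lt_R0 _ Hprod). pose proof sqrt_PI_pos.
  assert (Hinv : 0 < 1 / (lambda0 * z) / 2) by (apply Rdiv_lt_0_compat; [apply Rdiv_lt_0_compat|]; nra).
  rewrite <- sqrt_mult by lra.
  rewrite <- (sqrt_pow2 (1 / (lambda0 * sqrt (zb * (z - zb))) * sqrt PI / 2)).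
  2: { apply Rlt_le, Rdiv_lt_0_compat; [|lra]. apply Rmult_lt_0_compat; [|lra].
       apply Rdiv_lt_0_compat; nra. }
  f_equal. unfold K_rate.
  replace ((1 / (lambda0 * sqrt (zb * (z - zb))) * sqrt PI / 2) ^ 2)
    with ((sqrt PI * sqrt PI) / (4 * lambda0 ^ 2 * (sqrt (zb * (z - zb)) * sqrt (zb * (z - zb)))))
    by (field; lra).
  rewrite !sqrt_sqrt by (pose proof PI_RGT_0; lra). field. repeat split; lra.
Qed.

Section Kernel.

Variables lambda0 zb z x nu : R.
Hypotheses (Hl : 0 < lambda0) (Hzb : 0 < zb) (Hz : zb < z).

Let rate_pos : 0 < K_rate lambda0 zb z := K_rate_pos lambda0 zb z Hl Hzb Hz.

Local Notation P := (K_phase lambda0 z x nu).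
Local Notation Q := (chirp_primitive (K_rate lambda0 zb z) (K_center zb z x nu)).
Local Notation H := (chirp_half_integral (K_rate lambda0 zb z)).

Lemma Kintegrand_chirp xi :
  Kintegrand lambda0 zb z x nu xi = Cmult P (chirp (K_rate lambda0 zb z) (K_center zb z x nu) xi).
Proof.
  unfold Kintegrand, K_phase, chirp, K_rate, K_center. cbv zeta.
  rewrite !cexp_Cj_plus. do 3 f_equal. field. repeat split; lra.
Qed.

Lemma is_RInt_Kintegrand a b :
  @is_RInt C_R_NormedModule (Kintegrand lambda0 zb z x nu) a b
    (Cminus (Cmult P (Q b)) (Cmult P (Q a))).
Proof.
  apply (is_RInt_ext (fun xi => Cmult P (chirp (K_rate lambda0 zb z) (K_center zb z x nu) xi))).
  { intros xi _. symmetry. apply Kintegrand_chirp. }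
  replace (Cminus (Cmult P (Q b)) (Cmult P (Q a))) with (Cmult P (Cminus (Q b) (Q a))) by ring.
  apply is_RInt_Cmult, is_RInt_chirp, rate_pos.
Qed.

Lemma is_RInt_gen_Kintegrand_left xb1 :
  @is_RInt_gen C_R_NormedModule (Kintegrand lambda0 zb z x nu)
    (Rbar_locally m_infty) (at_point xb1) (Cmult P (Cplus (Q xb1) H)).
Proof.
  replace (Cmult P (Cplus (Q xb1) H)) with (Cminus (Cmult P (Q xb1)) (Cmult P (Copp H))) by ring.
  apply (is_RInt_gen_of_primitive (V := C_R_NormedModule) _ (fun X => Cmult P (Q X))).
  - apply is_RInt_Kintegrand.
  - apply filterlim_Cmult_l, filterlim_chirp_primitive_m_infty, rate_pos.
  - exact (filterlim_at_point_self (fun X => Cmult P (Q X)) xb1).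
Qed.

Lemma is_RInt_gen_Kintegrand_right xb2 :
  @is_RInt_gen C_R_NormedModule (Kintegrand lambda0 zb z x nu)
    (at_point xb2) (Rbar_locally p_infty) (Cmult P (Cminus H (Q xb2))).
Proof.
  replace (Cmult P (Cminus H (Q xb2))) with (Cminus (Cmult P H) (Cmult P (Q xb2))) by ring.
  apply (is_RInt_gen_of_primitive (V := C_R_NormedModule) _ (fun X => Cmult P (Q X))).
  - apply is_RInt_Kintegrand.
  - exact (filterlim_at_point_self (fun X => Cmult P (Q X)) xb2).
  - apply filterlim_Cmult_l, filterlim_chirp_primitive_p_infty, rate_pos.
Qed.

Lemma Kvalue_eq_Kclosed xb1 xb2 :
  Kvalue lambda0 zb z (Cmult P (Cplus (Q xb1) H)) (Cmult P (Cminus H (Q xb2))) =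
  Kclosed lambda0 zb xb1 xb2 z x nu.
Proof.
  assert (Hinv : 0 < 1 / (lambda0 * z)) by (apply Rdiv_lt_0_compat; nra).
  unfold Kvalue, Kclosed, Ffun, Erfc, chirp_primitive, chirp_half_integral, K_phase, K_center.
  cbv zeta. fold (K_rate lambda0 zb z).
  set (E1 := Erf _). set (E2 := Erf (Cmult _ (RtoC (xb2 - _)))).
  rewrite !Csqrt_Cj by assumption.
  set (u := sqrt (1 / (lambda0 * z) / 2)). set (v := sqrt (K_rate lambda0 zb z / 2)).
  set (kappa := 1 / (lambda0 * sqrt (zb * (z - zb)))).
  assert (Hv : 0 < v) by (apply sqrt_lt_R0; pose proof rate_pos; lra).
  assert (Huv : u * v = kappa * sqrt PI / 2) by (apply sqrt_K_rate_mult; assumption).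
  assert (Hkey : Cmult (Cmult Cj (RtoC kappa)) (RtoC (sqrt PI / 2)) = Cmult (Cmult (RtoC (1 / 2)) (u, u)) (v, v)).
  { unfold Cmult, Cj, RtoC. simpl. f_equal; nra. }
  assert (Hv0 : (v, v) <> RtoC 0) by (intros Heq; injection Heq; lra).
  set (phase := cexp _).
  transitivity (Cmult (Cmult (Cmult Cj (RtoC kappa)) (RtoC (sqrt PI / 2)))
                  (Cmult (Cinv (v, v)) (Cmult phase (Cplus (Cplus 1 E1) (Cminus 1 E2))))); [ring|].
  rewrite Hkey. field. exact Hv0.
Qed.

End Kernel.

Theorem proposition1 (lambda0 zb xb1 xb2 z x nu : R) :
  0 < lambda0 -> 0 < zb -> xb1 < xb2 -> zb < z ->
  exists I1 I2 : C,
    @is_RInt_gen C_R_NormedModule (Kintegrand lambda0 zb z x nu)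
      (Rbar_locally m_infty) (at_point xb1) I1 /\
    @is_RInt_gen C_R_NormedModule (Kintegrand lambda0 zb z x nu)
      (at_point xb2) (Rbar_locally p_infty) I2 /\
    Kvalue lambda0 zb z I1 I2 = Kclosed lambda0 zb xb1 xb2 z x nu.
Proof.
  intros Hl Hzb _ Hz.
  do 2 eexists. split; [|split].
  - apply is_RInt_gen_Kintegrand_left; assumption.
  - apply is_RInt_gen_Kintegrand_right; assumption.
  - apply Kvalue_eq_Kclosed; assumption.
Qed.
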